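(* Let $\hat g\colon M_2\to\mathbb{R}$ be a real-valued function on the set $M_2=\{(x_1,x_2)\in(0,\infty)^2 : x_1\geq x_2\}$, and let $W\colon \mathrm{GL}^+(2)\to\mathbb{R}$ be given by $W(F)=\hat g(\lambda_{\max}(F),\lambda_{\min}(F))$, where $\lambda_{\max}(F)\geq\lambda_{\min}(F)$ are the singular values of $F$. Suppose $\hat g\in C^2(\operatorname{int} M_2)\cap C^1(M_2)$, and suppose $W$ is Legendre-Hadamard elliptic at each $F\in\mathrm{GL}^+(2)$ with simple singular values $\lambda_{\max}(F)\neq\lambda_{\min}(F)$. Then $W$ is rank-one convex on $\mathrm{GL}^+(2)$.
   Context: $\mathrm{GL}^+(n)$ denotes the group of real invertible $n\times n$ matrices with positive determinant. $\operatorname{int}M_2=\{(x_1,x_2)\in(0,\infty)^2: x_1>x_2\}$. $\hat g\in C^1(M_2)$ means that $\hat g$ is continuously differentiable on $M_2$ up to the boundary $\{(x,x):x>0\}$ relative to $(0,\infty)^2$, i.e. $\hat g$ is the restriction of a continuously differentiable function on $(0,\infty)^2$. A function $W\colon\mathrm{GL}^+(n)\to\mathbb{R}$ is rank-one convex if for all $F_1,F_2\in\mathrm{GL}^+(n)$ with $\operatorname{rank}(F_2-F_1)=1$ and all $t\in[0,1]$ one has $W((1-t)F_1+tF_2)\leq(1-t)W(F_1)+tW(F_2)$. $W$ is Legendre-Hadamard elliptic at $F$ if $W$ is twice differentiable at $F$ and $D^2W[F].(\xi\otimes\eta,\xi\otimes\eta)\geq0$ for all $\xi,\eta\in\mathbb{R}^n$.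 *)

From HB Require Import structures.
From mathcomp Require Import all_boot all_order all_algebra.
From mathcomp Require Import all_classical all_reals all_analysis.
Set Implicit Arguments. Unset Strict Implicit. Unset Printing Implicit Defensive.
Import Order.TTheory GRing.Theory Num.Theory.
Import numFieldNormedType.Exports.
Local Open Scope classical_set_scope.
Local Open Scope ring_scope.

Section Defs.
Context {R : realType}.

Definition M2 : set (R * R) := [set x | 0 < x.2 /\ x.2 <= x.1].
Definition intM2 : set (R * R) := [set x | 0 < x.2 /\ x.2 < x.1].
Definition quadrant : set (R * R) := [set x | 0 < x.1 /\ 0 < x.2].

(* f is C^1 on the open set U: Frechet differentiable at every point of U,
   with continuous derivative (equivalently, in finite dimension, every
   directional derivative x |-> df(x) v is continuous on U). *)
Definition C1_on {V : normedModType R} (U : set V) (f : V -> R) : Prop :=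
  forall x, U x ->
    differentiable f x /\ forall v : V, {for x, continuous (fun y => 'd f y v)}.

Definition C2_on {V : normedModType R} (U : set V) (f : V -> R) : Prop :=
  C1_on U f /\ forall v : V, C1_on U (fun y => 'd f y v).

(* g in C^1(M_2): g is the restriction to M_2 of a C^1 function on (0,oo)^2 *)
Definition C1_M2 (g : R * R -> R) : Prop :=
  exists G : R * R -> R, C1_on quadrant G /\ forall x, M2 x -> G x = g x.

Definition GLp2 (F : 'M[R]_2) : Prop := 0 < \det F.

(* eigenvalues of the symmetric positive semidefinite 2x2 matrix C = F^T F,
   i.e. the two roots of its characteristic polynomial X^2 - tr C X + det C *)
Definition CG (F : 'M[R]_2) : 'M[R]_2 := F^T *m F.
Definition eig_max (F : 'M[R]_2) : R :=
  (\tr (CG F) + Num.sqrt (\tr (CG F) ^+ 2 - 4 * \det (CG F))) / 2.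
Definition eig_min (F : 'M[R]_2) : R :=
  (\tr (CG F) - Num.sqrt (\tr (CG F) ^+ 2 - 4 * \det (CG F))) / 2.

Definition lambda_max (F : 'M[R]_2) : R := Num.sqrt (eig_max F).
Definition lambda_min (F : 'M[R]_2) : R := Num.sqrt (eig_min F).

Definition W_of (g : R * R -> R) (F : 'M[R]_2) : R := g (lambda_max F, lambda_min F).

(* W twice (Frechet) differentiable at F: differentiable near F, and the
   derivative X |-> dW(X) is differentiable at F (tested on each direction,
   which is equivalent in finite dimension). *)
Definition twice_differentiable_at (W : 'M[R]_2 -> R) (F : 'M[R]_2) : Prop :=
  (\forall X \near F, differentiable W X) /\
  forall H : 'M[R]_2, differentiable (fun X => 'd W X H) F.

Definition D2 (W : 'M[R]_2 -> R) (F H K : 'M[R]_2) : R :=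
  'd (fun X => 'd W X H) F K.

Definition dyad (xi eta : 'cV[R]_2) : 'M[R]_2 := xi *m eta^T.

Definition LH_elliptic_at (W : 'M[R]_2 -> R) (F : 'M[R]_2) : Prop :=
  twice_differentiable_at W F /\
  forall xi eta : 'cV[R]_2, 0 <= D2 W F (dyad xi eta) (dyad xi eta).

Definition rank_one_convex_GLp2 (W : 'M[R]_2 -> R) : Prop :=
  forall F1 F2 : 'M[R]_2, GLp2 F1 -> GLp2 F2 -> \rank (F2 - F1) = 1%N ->
  forall t : R, 0 <= t <= 1 ->
    W ((1 - t) *: F1 + t *: F2) <= (1 - t) * W F1 + t * W F2.

End Defs.

From HB Require Import structures.
From mathcomp Require Import all_boot all_order all_algebra.
From mathcomp Require Import all_classical all_reals all_analysis.
From mathcomp Require Import ring lra.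
Import Order.TTheory GRing.Theory Num.Theory.
Import numFieldNormedType.Exports.
Local Open Scope classical_set_scope.
Local Open Scope ring_scope.

(* Along a rank-one segment s |-> A + s H the determinant is affine in s, so
   the segment stays in GL^+(2), and W is convex on it as soon as
   s |-> D^2 W[A + s H].(H, H) is nonnegative, which Legendre-Hadamard
   ellipticity provides wherever the singular values are simple. They coincide
   exactly on the plane of conformal matrices [[a, b], [-b, a]]. A rank-one H
   is not conformal, so translating the segment by e K for a suitable K makes
   it miss that plane for all but one value of e. Letting e -> 0+ and using
   that W is continuous on GL^+(2), which is where g in C^1(M_2) enters, gives
   the inequality on the original segment. *)

Lemma sum_ord2 (V : nmodType) (f : 'I_2 -> V) : \sum_(i < 2) f i = f 0 + f 1.
Proof. by rewrite !big_ord_recl big_ord0 addr0; congr (f _ + f _); apply: val_inj. Qed.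

Lemma ord2P (i : 'I_2) : i = 0 \/ i = 1.
Proof. by case: i => [[|[|//]] i2]; [left | right]; apply: val_inj. Qed.

Lemma det_mx2 (R : comNzRingType) (F : 'M[R]_2) :
  \det F = F 0 0 * F 1 1 - F 0 1 * F 1 0.
Proof.
rewrite (expand_det_row F 0) sum_ord2 /cofactor !det_mx11 !mxE.
have -> : lift 0 (0 : 'I_1) = 1 :> 'I_2 by apply: val_inj.
have -> : lift 1 (0 : 'I_1) = 0 :> 'I_2 by apply: val_inj.
by rewrite /= expr0 expr1; ring.
Qed.

Lemma det_line (R : comNzRingType) (A H : 'M[R]_2) (s : R) : \det H = 0 ->
  \det (A + s *: H) = (1 - s) * \det A + s * \det (A + H).
Proof.
move=> H0.
transitivity ((1 - s) * \det A + s * \det (A + H) + (s ^+ 2 - s) * \det H).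
  by rewrite !det_mx2 !mxE; ring.
by rewrite H0 mulr0 addr0.
Qed.

Lemma det_eq0_rank_lt (F : fieldType) n (A : 'M[F]_n) : (\rank A < n)%N -> \det A = 0.
Proof.
move=> rk; apply/eqP; rewrite -[_ == 0]negbK -unitfE -unitmxE -row_free_unit.
by rewrite /row_free ltn_eqF.
Qed.

Section convexity_along_segment.
Context {R : realType} {V : normedModType R}.
Implicit Types (W : V -> R) (A H : V).

Lemma cvg_line A H (s : R) : (fun e : R => A + e *: H) @ s --> A + s *: H.
Proof. by apply: cvgD; [exact: cvg_cst | exact: cvgZr_tmp]. Qed.

Lemma cvg_line_right {T : topologicalType} {f : V -> T} {A} H :
  {for A, continuous f} -> f (A + e *: H) @[e --> 0^'+] --> f A.
Proof.
move=> f_cont; apply: cvg_at_right_filter.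
have := cvg_line A H 0; rewrite scale0r addr0 => line_cvg.
exact: cvg_comp line_cvg f_cont.
Qed.

Lemma near_right_neq (a c : R) : \forall e \near a^'+, e != c.
Proof.
have [ac | ca] := ltP a c.
  by apply: filterS (nbhs_right_lt ac) => e; rewrite lt_neqAle => /andP[].
by apply: filterS (nbhs_right_gt a) => e ae; rewrite gt_eqF // (le_lt_trans ca ae).
Qed.

Lemma is_derive_along_line {W A H} {s : R} : differentiable W (A + s *: H) ->
  is_derive s 1 (fun e : R => W (A + e *: H)) ('d W (A + s *: H) H).
Proof.
move=> dW; have dWH : derivable W (A + s *: H) H by exact: diff_derivable.
have quotientE : (fun h : R => h^-1 *: ((fun e : R => W (A + e *: H)) (h *: 1 + s)
                                         - W (A + s *: H)))
               = (fun h : R => h^-1 *: (W (h *: H + (A + s *: H)) - W (A + s *: H))).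
  by apply: funext => h /=; rewrite scaler1 scalerDl addrCA.
apply: DeriveDef; first by rewrite /derivable quotientE.
by rewrite -deriveE // /derive quotientE.
Qed.

Lemma convex_along_segment W A H :
  (forall s : R, 0 <= s <= 1 ->
    [/\ \forall X \near A + s *: H, differentiable W X,
        differentiable (fun X => 'd W X H) (A + s *: H) &
        0 <= 'd (fun X => 'd W X H) (A + s *: H) H]) ->
  forall t : R, 0 <= t <= 1 -> W (A + t *: H) <= (1 - t) * W A + t * W (A + H).
Proof.
move=> hyp t t01; set f := fun e : R => W (A + e *: H).
have f'E (s : R) : 0 <= s <= 1 -> \forall e \near s, 'd W (A + e *: H) H = 'D_1 f e.
  case/hyp => dW _ _.
  have dW_near : \forall e \near s, differentiable W (A + e *: H) := cvg_line A H s _ dW.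
  apply: filterS dW_near => e dWe.
  by have [_ ->] := is_derive_along_line dWe.
have f'_derive (s : R) : 0 <= s <= 1 -> is_derive s 1 f ('d W (A + s *: H) H).
  by case/hyp => /nbhs_singleton dW _ _; exact: is_derive_along_line.
have f''_derive (s : R) : 0 <= s <= 1 ->
    is_derive s 1 ('D_1 f) ('d (fun X => 'd W X H) (A + s *: H) H).
  move=> s01; apply: near_eq_is_derive (f'E s s01) _.
  by case/hyp: s01 => _ dW' _; exact: (is_derive_along_line (W := fun X => 'd W X H)).
have f_cont (s : R) : 0 <= s <= 1 -> {for s, continuous f}.
  move/f'_derive => [f'_s _]; exact/differentiable_continuous/derivable1_diffP.
have in01 (x : R) : x \in `]0, 1[ -> 0 <= x <= 1.
  by rewrite in_itv /= => /andP[x0 x1]; rewrite !ltW.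
have f''_ge0 (x : R) : 0 < x < 1 -> 0 <= 'D_1 ('D_1 f) x.
  move=> /andP[x0 x1]; have x01 : 0 <= x <= 1 by rewrite !ltW.
  by have [_ ->] := f''_derive x x01; case: (hyp x x01).
have f_cvg1 : f x @[x --> 1^'-] --> f 1 by apply/cvg_at_left_filter/f_cont; lra.
have f_cvg0 : f x @[x --> 0^'+] --> f 0 by apply/cvg_at_right_filter/f_cont; lra.
have f'_ex : {in `]0, 1[, forall x, derivable f x 1}.
  by move=> x /in01 /f'_derive [].
have f''_ex : {in `]0, 1[, forall x, derivable ('D_1 f) x 1}.
  by move=> x /in01 /f''_derive [].
have t0 : 0 <= 1 - t by lra.
have t1 : 1 - t <= 1 by lra.
have := second_derivative_convex f''_ge0 f_cvg1 f_cvg0 f'_ex f''_ex (Itv01 t0 t1) ler01.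
rewrite !convRE /= /f.
have -> : unstable.onem (1 - t) = t by rewrite /unstable.onem; lra.
by rewrite mulr0 add0r mulr1 scale0r addr0 scale1r.
Qed.

End convexity_along_segment.

Section singular_values.
Context {R : realType}.
Implicit Types F H A : 'M[R]_2.

(* Zero exactly on the conformal matrices [[a, b], [-b, a]]; by discr_CG it is
   the factor of the discriminant of F^T F that detects repeated singular values. *)
Definition conf_defect F := (F 0 0 - F 1 1) ^+ 2 + (F 0 1 + F 1 0) ^+ 2.

Lemma conf_defect_ge0 F : 0 <= conf_defect F.
Proof. by rewrite addr_ge0 ?sqr_ge0. Qed.

Lemma conf_defect_eq0 F : conf_defect F = 0 -> F 1 1 = F 0 0 /\ F 1 0 = - F 0 1.
Proof.
move/eqP; rewrite paddr_eq0 ?sqr_ge0 // !sqrf_eq0 subr_eq0 addr_eq0.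
by case/andP=> /eqP-> /eqP->; rewrite opprK.
Qed.

Lemma tr_CG F : \tr (CG F) = F 0 0 ^+ 2 + F 0 1 ^+ 2 + F 1 0 ^+ 2 + F 1 1 ^+ 2.
Proof. by rewrite /CG /mxtrace sum_ord2 !mxE !sum_ord2 !mxE; ring. Qed.

Lemma det_CG F : \det (CG F) = \det F ^+ 2.
Proof. by rewrite /CG det_mulmx det_tr expr2. Qed.

Lemma discr_CG F : \tr (CG F) ^+ 2 - 4 * \det (CG F) =
  conf_defect F * ((F 0 0 + F 1 1) ^+ 2 + (F 0 1 - F 1 0) ^+ 2).
Proof. by rewrite tr_CG det_CG det_mx2 /conf_defect; ring. Qed.

Lemma discr_CG_ge0 F : 0 <= \tr (CG F) ^+ 2 - 4 * \det (CG F).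
Proof. by rewrite discr_CG mulr_ge0 ?conf_defect_ge0 // addr_ge0 ?sqr_ge0. Qed.

Lemma sqrt_discr_CG_le F :
  Num.sqrt (\tr (CG F) ^+ 2 - 4 * \det (CG F)) <= \tr (CG F).
Proof.
have tr_ge0 : 0 <= \tr (CG F) by rewrite tr_CG; nra.
rewrite -[leRHS]ger0_norm // -sqrtr_sqr ler_wsqrtr // det_CG; nra.
Qed.

Lemma sqrt_discr_CG_lt F : \det F != 0 ->
  Num.sqrt (\tr (CG F) ^+ 2 - 4 * \det (CG F)) < \tr (CG F).
Proof.
move=> F0; have detCG_gt0 : 0 < \det (CG F) by rewrite det_CG exprn_even_gt0.
have discr_ge0 := discr_CG_ge0 F.
have tr_ge0 := le_trans (sqrtr_ge0 _) (sqrt_discr_CG_le F).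
rewrite -[ltRHS]ger0_norm // -sqrtr_sqr ltr_sqrt; lra.
Qed.

Lemma eig_min_ge0 F : 0 <= eig_min F.
Proof. by rewrite /eig_min divr_ge0 // subr_ge0 sqrt_discr_CG_le. Qed.

Lemma eig_min_le_max F : eig_min F <= eig_max F.
Proof.
rewrite /eig_min /eig_max.
have := sqrtr_ge0 (\tr (CG F) ^+ 2 - 4 * \det (CG F)); lra.
Qed.

Lemma lambda_min_le_max F : lambda_min F <= lambda_max F.
Proof. exact/ler_wsqrtr/eig_min_le_max. Qed.

Lemma lambda_min_gt0 {F} : \det F != 0 -> 0 < lambda_min F.
Proof. by move=> F0; rewrite sqrtr_gt0 /eig_min divr_gt0 // subr_gt0 sqrt_discr_CG_lt. Qed.

Lemma lambda_max_neq_min {F} : GLp2 F -> conf_defect F != 0 ->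
  lambda_max F != lambda_min F.
Proof.
rewrite /GLp2 => F_gt0 cF0.
have cF_gt0 : 0 < conf_defect F by rewrite lt_def cF0 conf_defect_ge0.
have discr_gt0 : 0 < \tr (CG F) ^+ 2 - 4 * \det (CG F).
  have -> : \tr (CG F) ^+ 2 - 4 * \det (CG F) =
      conf_defect F * (conf_defect F + 4 * \det F).
    by rewrite discr_CG det_mx2 /conf_defect; ring.
  by rewrite mulr_gt0 // ltr_wpDl ?conf_defect_ge0 // mulr_gt0.
rewrite /lambda_max /lambda_min eqr_sqrt ?eig_min_ge0 //; last first.
  exact: le_trans (eig_min_ge0 F) (eig_min_le_max F).
rewrite /eig_max /eig_min; apply/negP => /eqP E.
have : 0 < Num.sqrt (\tr (CG F) ^+ 2 - 4 * \det (CG F)) by rewrite sqrtr_gt0.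
lra.
Qed.

Lemma conf_defect_rank1_gt0 {H} : \rank H = 1%N -> 0 < conf_defect H.
Proof.
move=> rkH; rewrite lt_def conf_defect_ge0 andbT.
apply/eqP => /conf_defect_eq0 [H11 H10].
have : \det H = 0 by apply: det_eq0_rank_lt; rewrite rkH.
rewrite det_mx2 H11 H10 mulrN opprK -!expr2 => /eqP.
rewrite paddr_eq0 ?sqr_ge0 // !sqrf_eq0 => /andP[/eqP H00 /eqP H01].
suff H0 : H = 0 by rewrite H0 mxrank0 in rkH.
apply/matrixP => i j; rewrite mxE.
by case: (ord2P i) => ->; case: (ord2P j) => ->; rewrite ?H11 ?H10 ?H00 ?H01 ?oppr0.
Qed.

Lemma conf_defect_transversal {H} : 0 < conf_defect H ->
  exists K, forall A, exists c : R, forall e s : R,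
    e != c -> conf_defect (A + e *: K + s *: H) != 0.
Proof.
move=> H_gt0; set u := H 0 0 - H 1 1; set v := H 0 1 + H 1 0.
(* K moves (F00 - F11, F01 + F10) orthogonally to (u, v), so A + e K + s H can
   only be conformal for the single value e = c. *)
exists (\matrix_(i, j) (if i == 0 then if j == 0 then - v else u else 0)) => A.
exists (((A 0 0 - A 1 1) * v - (A 0 1 + A 1 0) * u) / conf_defect H) => e s.
apply: contra_neq => /conf_defect_eq0; rewrite !mxE /= => -[e11 e10].
rewrite -[e](mulfK (lt0r_neq0 H_gt0)); congr (_ / _).
have eu : e * u = - (A 0 1 + A 1 0) - s * v by move: e11 e10; rewrite /u /v; lra.
have ev : e * v = A 0 0 - A 1 1 + s * u by move: e11 e10; rewrite /u /v; lra.
transitivity (u * (e * u) + v * (e * v)); first by rewrite /conf_defect -/u -/v; ring.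
by rewrite eu ev; ring.
Qed.

Lemma continuous_det2 : continuous (fun F : 'M[R]_2 => \det F).
Proof.
move=> F; have entry_cont i j := @coord_continuous R 2 2 i j F.
under eq_fun do rewrite det_mx2.
exact: cvgB (cvgM (entry_cont 0 0) (entry_cont 1 1))
            (cvgM (entry_cont 0 1) (entry_cont 1 0)).
Qed.

Lemma continuous_tr_CG : continuous (fun F : 'M[R]_2 => \tr (CG F)).
Proof.
move=> F; have sq_cont i j : {for F, continuous (fun M : 'M[R]_2 => M i j ^+ 2)}.
  exact: continuous_comp (@coord_continuous _ 2 2 i j F) (@exprn_continuous R 2 _).
under eq_fun do rewrite tr_CG.
exact: cvgD (cvgD (cvgD (sq_cont 0 0) (sq_cont 0 1)) (sq_cont 1 0)) (sq_cont 1 1).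
Qed.

Lemma continuous_sqrt_discr_CG :
  continuous (fun F : 'M[R]_2 => Num.sqrt (\tr (CG F) ^+ 2 - 4 * \det (CG F))).
Proof.
under eq_fun do rewrite det_CG.
move=> F; have sq_cont (f : 'M[R]_2 -> R) : {for F, continuous f} ->
    {for F, continuous (fun M => f M ^+ 2)}.
  by move=> f_cont; exact: continuous_comp f_cont (@exprn_continuous R 2 _).
have discr_cont : {for F, continuous (fun M => \tr (CG M) ^+ 2 - 4 * \det M ^+ 2)}.
  exact: cvgB (sq_cont _ (continuous_tr_CG F))
              (cvgMl_tmp (a := 4) (sq_cont _ (continuous_det2 F))).
exact: continuous_comp discr_cont (@sqrt_continuous R _).
Qed.

Lemma continuous_lambda_max : continuous (@lambda_max R).
Proof.
move=> F; apply: (continuous_comp (f := @eig_max R)); last exact: sqrt_continuous.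
exact: cvgMr_tmp _ (cvgD (continuous_tr_CG F) (continuous_sqrt_discr_CG F)).
Qed.

Lemma continuous_lambda_min : continuous (@lambda_min R).
Proof.
move=> F; apply: (continuous_comp (f := @eig_min R)); last exact: sqrt_continuous.
exact: cvgMr_tmp _ (cvgB (continuous_tr_CG F) (continuous_sqrt_discr_CG F)).
Qed.

Lemma rank1_dyad {H} : \rank H = 1%N -> exists xi eta, H = dyad xi eta.
Proof.
move=> rkH; have := mulmx_base H.
move: (col_base H) (row_base H); rewrite rkH => X Y XY.
by exists X, Y^T; rewrite /dyad trmxK XY.
Qed.

Lemma GLp2_segment {A H} {s : R} : \det H = 0 -> GLp2 A -> GLp2 (A + H) ->
  0 <= s <= 1 -> GLp2 (A + s *: H).
Proof. by rewrite /GLp2 => H0 A_gt0 AH_gt0 /andP[s0 s1]; rewrite det_line //; nra. Qed.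

Lemma continuous_W_of {g : R * R -> R} {F} : C1_M2 g -> GLp2 F ->
  {for F, continuous (W_of g)}.
Proof.
case=> G [G_C1 GE] F_GL.
have lmin_gt0 := lambda_min_gt0 (lt0r_neq0 F_GL).
pose L (M : 'M[R]_2) := (lambda_max M, lambda_min M).
have L_cont : {for F, continuous L}.
  exact: cvg_pair (continuous_lambda_max F) (continuous_lambda_min F).
have LM2 M : 0 < lambda_min M -> M2 (L M) by split => //; exact: lambda_min_le_max.
have G_cont : {for L F, continuous G}.
  have LF_quadrant : quadrant (L F).
    by split => //=; exact: lt_le_trans lmin_gt0 (lambda_min_le_max F).
  exact/differentiable_continuous/(G_C1 _ LF_quadrant).1.
have W_near : \forall M \near F, G (L M) = W_of g M.
  have lmin_near : \forall M \near F, 0 < lambda_min M.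
    exact: cvgr_gt (continuous_lambda_min F) _ lmin_gt0.
  by apply: filterS lmin_near => M /LM2; exact: GE.
have WF : W_of g F = G (L F) by rewrite GE //; exact: LM2.
rewrite /prop_for /continuous_at WF.
exact: cvg_trans (near_eq_cvg W_near) (continuous_comp L_cont G_cont).
Qed.

Lemma GLp2_near_line {A} K : GLp2 A -> \forall e \near (0 : R)^'+, GLp2 (A + e *: K).
Proof. by move=> A_GL; exact: cvgr_gt (cvg_line_right K (continuous_det2 A)) _ A_GL. Qed.

End singular_values.

Section rank_one_convexity.
Context {R : realType} {g : R * R -> R}.
Hypothesis W_LH : forall F : 'M[R]_2, GLp2 F -> lambda_max F != lambda_min F ->
  LH_elliptic_at (W_of g) F.

Lemma W_convex_on_nonconformal_segment A H : \rank H = 1%N -> GLp2 A -> GLp2 (A + H) ->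
  (forall s : R, 0 <= s <= 1 -> conf_defect (A + s *: H) != 0) ->
  forall t : R, 0 <= t <= 1 ->
    W_of g (A + t *: H) <= (1 - t) * W_of g A + t * W_of g (A + H).
Proof.
move=> rkH A_GL AH_GL A_nonconf; apply: convex_along_segment => s s01.
have detH : \det H = 0 by apply: det_eq0_rank_lt; rewrite rkH.
have As_GL := GLp2_segment detH A_GL AH_GL s01.
have [[dW_near dW'] LH] := W_LH _ As_GL (lambda_max_neq_min As_GL (A_nonconf s s01)).
have [xi [eta H_dyad]] := rank1_dyad rkH.
by split => //; have := LH xi eta; rewrite -H_dyad.
Qed.

Lemma W_convex_on_shifted_segments {A H} {t : R} :
  \rank H = 1%N -> GLp2 A -> GLp2 (A + H) -> 0 <= t <= 1 ->
  exists K, \forall e \near 0^'+, W_of g (A + t *: H + e *: K) <=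
    (1 - t) * W_of g (A + e *: K) + t * W_of g (A + H + e *: K).
Proof.
move=> rkH A_GL AH_GL t01.
have [K K_transversal] := conf_defect_transversal (conf_defect_rank1_gt0 rkH).
have [c K_nonconf] := K_transversal A.
exists K.
apply: filterS3 (GLp2_near_line K A_GL) (GLp2_near_line K AH_GL) (near_right_neq 0 c).
move=> e Ae_GL AHe_GL e_neq_c; rewrite !(addrAC A _ (e *: K)) in AHe_GL *.
by apply: W_convex_on_nonconformal_segment => // s _; exact: K_nonconf.
Qed.

End rank_one_convexity.

Theorem theorem3p2 (R : realType) (g : R * R -> R) :
  C2_on intM2 g -> C1_M2 g ->
  (forall F : 'M[R]_2, GLp2 F -> lambda_max F != lambda_min F ->
     LH_elliptic_at (W_of g) F) ->
  rank_one_convex_GLp2 (W_of g).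
Proof.
move=> _ g_C1 W_LH F1 F2 F1_GL F2_GL rkH t t01.
set H := F2 - F1 in rkH *.
have F2E : F2 = F1 + H by rewrite /H addrC subrK.
have -> : (1 - t) *: F1 + t *: F2 = F1 + t *: H.
  by rewrite F2E scalerDr addrA -scalerDl subrK scale1r.
rewrite F2E in F2_GL *.
have detH : \det H = 0 by apply: det_eq0_rank_lt; rewrite rkH.
have Ft_GL := GLp2_segment detH F1_GL F2_GL t01.
have [K W_convex_near] := W_convex_on_shifted_segments W_LH rkH F1_GL F2_GL t01.
have cvg_W B : GLp2 B -> W_of g (B + e *: K) @[e --> 0^'+] --> W_of g B.
  by move=> B_GL; exact: cvg_line_right K (continuous_W_of g_C1 B_GL).
rewrite -subr_ge0; apply: (cvgr_to_ge (FF := at_right_proper_filter 0)).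
  exact: cvgB (cvgD (cvgMl_tmp (cvg_W _ F1_GL)) (cvgMl_tmp (cvg_W _ F2_GL)))
              (cvg_W _ Ft_GL).
by apply: filterS W_convex_near => e; rewrite subr_ge0.
Qed.
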